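(* Let $M>0$ and $0\le a<M$, and set $r_+=M+\sqrt{M^2-a^2}$, $\Delta(r)=r^2-2Mr+a^2$. Let $E,L_z,Q\in\mathbb{R}$ with $Q<0$ be such that there exists $\theta\in(0,\pi)$ with $\Theta(\theta,E,L_z,Q)\ge 0$, where $$\Theta(\theta,E,L_z,Q)=Q-\Big(\frac{L_z^2}{\sin^2\theta}-E^2a^2\Big)\cos^2\theta .$$ Let $K=Q+(aE-L_z)^2$ and $$R(r)=\big((r^2+a^2)E-aL_z\big)^2-\Delta(r)K = E^2r^4+(a^2E^2-Q-L_z^2)r^2+2MKr-a^2Q.$$ Then $R(r)>0$ for all $r\in(r_+,\infty)$.
   Context: This concerns null geodesics in the exterior region $r>r_+$ of a sub-extremal Kerr spacetime of mass $M$ and rotation parameter $a$, written in Boyer–Lindquist coordinates $(t,r,\theta,\phi)$. For a null geodesic with affine parameter, $E=-g(\partial_t,\dot\gamma)$ is the energy, $L_z=g(\partial_\phi,\dot\gamma)$ the axial angular momentum, $K$ Carter's constant and $Q=K-(aE-L_z)^2$; with $\Sigma=r^2+a^2\cos^2\theta$ these satisfy $\Sigma^2\dot r^2=R(r)$ and $\Sigma^2\dot\theta^2=\Theta(\theta,E,L_z,Q)$, so a null geodesic with these constants can only pass through points where $\Theta\ge 0$. *)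

From Stdlib Require Import Reals Lra.
Open Scope R_scope.

Definition r_plus (M a : R) : R := M + sqrt (M ^ 2 - a ^ 2).
Definition Delta (M a r : R) : R := r ^ 2 - 2 * M * r + a ^ 2.
Definition Theta (a th E Lz Q : R) : R :=
  Q - (Lz ^ 2 / (sin th) ^ 2 - E ^ 2 * a ^ 2) * (cos th) ^ 2.
Definition Kcarter (a E Lz Q : R) : R := Q + (a * E - Lz) ^ 2.
Definition Rpot (M a E Lz Q r : R) : R :=
  ((r ^ 2 + a ^ 2) * E - a * Lz) ^ 2 - Delta M a r * Kcarter a E Lz Q.

(** When [Q < 0], the angular potential [Theta] can be nonnegative somewhere
    only if [cos th <> 0] and [Lz^2 < E^2 a^2 sin^2 th <= E^2 a^2].  Outside
    the horizon [Delta > 0], so [R] is positive when [K < 0] (it is a square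
    minus [Delta K]); when [K >= 0] every coefficient of the expanded quartic
    [E^2 r^4 + (a^2 E^2 - Q - Lz^2) r^2 + 2 M K r - a^2 Q] is nonnegative and
    the leading one is positive. *)
From Pilot Require Import Defs.
From Stdlib Require Import Reals Lra Psatz.
Open Scope R_scope.

Lemma Theta_mul_sin2 (a th E Lz Q : R) : sin th <> 0 ->
  sin th ^ 2 * Theta a th E Lz Q =
  Q * sin th ^ 2 - Lz ^ 2 * cos th ^ 2 + E ^ 2 * a ^ 2 * cos th ^ 2 * sin th ^ 2.
Proof. intros Hsin; unfold Theta; field; exact Hsin. Qed.

Lemma Theta_nonneg_Lz2_lt (a th E Lz Q : R) : sin th <> 0 -> Q < 0 ->
  0 <= Theta a th E Lz Q -> Lz ^ 2 < E ^ 2 * a ^ 2.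
Proof.
  intros Hsin HQ HT.
  assert (Hs : 0 < sin th ^ 2)
    by (rewrite <- Rsqr_pow2; apply Rsqr_pos_lt; exact Hsin).
  assert (Hsc : sin th ^ 2 + cos th ^ 2 = 1).
  { pose proof (sin2_cos2 th) as H; unfold Rsqr in H; lra. }
  pose proof (pow2_ge_0 (cos th)) as Hc0.
  pose proof (pow2_ge_0 (E * a)) as HEa.
  assert (HsT : 0 <= Q * sin th ^ 2 - Lz ^ 2 * cos th ^ 2
                     + E ^ 2 * a ^ 2 * cos th ^ 2 * sin th ^ 2).
  { rewrite <- Theta_mul_sin2 by exact Hsin; apply Rmult_le_pos; lra. }
  set (s := sin th ^ 2) in *; set (c := cos th ^ 2) in *.
  assert (Hc : 0 < c).
  { destruct Hc0 as [Hc | Hc]; [exact Hc |].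
    rewrite <- Hc in HsT; nra. }
  assert (Q * s < 0) by nra.
  assert (0 <= E ^ 2 * a ^ 2 * c * c) by (apply Rmult_le_pos; nra).
  assert (Lz ^ 2 * c < E ^ 2 * a ^ 2 * c) by nra.
  nra.
Qed.

Lemma Delta_pos_beyond_r_plus (M a r : R) :
  a ^ 2 <= M ^ 2 -> r_plus M a < r -> 0 < Defs.Delta M a r.
Proof.
  unfold r_plus, Defs.Delta; intros Ha Hr.
  pose proof (sqrt_pos (M ^ 2 - a ^ 2)).
  pose proof (sqrt_sqrt (M ^ 2 - a ^ 2) ltac:(lra)).
  nra.
Qed.

Lemma Rpot_expand (M a E Lz Q r : R) :
  Rpot M a E Lz Q r = E ^ 2 * r ^ 4 + (a ^ 2 * E ^ 2 - Q - Lz ^ 2) * r ^ 2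
                      + 2 * M * Kcarter a E Lz Q * r - a ^ 2 * Q.
Proof. unfold Rpot, Defs.Delta, Kcarter; ring. Qed.

Lemma Rpot_pos_Kcarter_neg (M a E Lz Q r : R) :
  0 < Defs.Delta M a r -> Kcarter a E Lz Q < 0 -> 0 < Rpot M a E Lz Q r.
Proof.
  intros HD HK; unfold Rpot.
  pose proof (pow2_ge_0 ((r ^ 2 + a ^ 2) * E - a * Lz)).
  nra.
Qed.

Lemma Rpot_pos_Kcarter_nonneg (M a E Lz Q r : R) :
  0 <= M -> 0 < r -> Q <= 0 -> Lz ^ 2 < E ^ 2 * a ^ 2 ->
  0 <= Kcarter a E Lz Q -> 0 < Rpot M a E Lz Q r.
Proof.
  intros HM Hr HQ HL HK; rewrite Rpot_expand.
  pose proof (pow2_ge_0 Lz).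
  assert (0 < E ^ 2 * r ^ 4)
    by (apply Rmult_lt_0_compat; [nra | apply pow_lt; exact Hr]).
  assert (0 <= (a ^ 2 * E ^ 2 - Q - Lz ^ 2) * r ^ 2)
    by (apply Rmult_le_pos; [lra | apply pow2_ge_0]).
  assert (0 <= 2 * M * Kcarter a E Lz Q * r)
    by (repeat apply Rmult_le_pos; lra).
  pose proof (pow2_ge_0 a).
  nra.
Qed.

Theorem lemma1 (M a E Lz Q : R) :
  0 < M -> 0 <= a -> a < M -> Q < 0 ->
  (exists th, 0 < th < PI /\ 0 <= Theta a th E Lz Q) ->
  forall r, r_plus M a < r -> 0 < Rpot M a E Lz Q r.
Proof.
  intros HM Ha HaM HQ [th [Hth HT]] r Hr.
  assert (HL : Lz ^ 2 < E ^ 2 * a ^ 2).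
  { apply (Theta_nonneg_Lz2_lt a th E Lz Q); [| exact HQ | exact HT].
    apply Rgt_not_eq, sin_gt_0; apply Hth. }
  assert (HD : 0 < Defs.Delta M a r)
    by (apply Delta_pos_beyond_r_plus; [nra | exact Hr]).
  assert (Hr0 : 0 < r).
  { unfold r_plus in Hr; pose proof (sqrt_pos (M ^ 2 - a ^ 2)); lra. }
  destruct (Rlt_or_le (Kcarter a E Lz Q) 0) as [HK | HK].
  - exact (Rpot_pos_Kcarter_neg M a E Lz Q r HD HK).
  - apply Rpot_pos_Kcarter_nonneg; lra.
Qed.
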